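(* Let $k$ be a finite extension of $\mathbb{Q}_p$ and let $L$ be a finite-dimensional nonabelian reductive Lie algebra over $k$. If $L$ is CA, then $L$ is simple of $k$-rank at most $1$.
   Context: A Lie algebra is CA if the centralizer of each of its nonzero elements is abelian. The $k$-rank of a semisimple Lie algebra over $k$ is the dimension of any of its maximal split toral subalgebras. *)

From HB Require Import structures.
From mathcomp Require Import all_boot all_order all_algebra.
Set Implicit Arguments. Unset Strict Implicit. Unset Printing Implicit Defensive.
Import Order.TTheory GRing.Theory Num.Theory.
Local Open Scope ring_scope.

(* A field k is a finite extension of Q_p iff it carries a valuation  *)
(* v (values in Q, normalised by v(p) = 1) extending the p-adic       *)
(* valuation of Q, k is complete for v, and k is finite-dimensional   *)
(* over the closure of Q in k (that closure is Q_p = the completion   *)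
(* of Q at p).                                                        *)

Section Padic.
Variables (p : nat) (k : fieldType) (v : k -> rat).

Definition v_converges (u : nat -> k) (l : k) : Prop :=
  forall N : rat, exists M : nat, forall n : nat, (M <= n)%N ->
    u n = l \/ N <= v (u n - l).

Definition v_cauchy (u : nat -> k) : Prop :=
  forall N : rat, exists M : nat, forall m n : nat, (M <= m)%N -> (M <= n)%N ->
    u m = u n \/ N <= v (u m - u n).

Definition padic_valuation : Prop :=
  [/\ forall x y : k, x != 0 -> y != 0 -> v (x * y) = v x + v y,
      forall x y : k, x != 0 -> y != 0 -> x + y != 0 ->
        Num.min (v x) (v y) <= v (x + y)
    & forall n : nat, (0 < n)%N -> v (n%:R) = (logn p n)%:R].

Definition v_complete : Prop :=
  forall u : nat -> k, v_cauchy u -> exists l, v_converges u l.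

Definition in_Qp (x : k) : Prop :=
  exists u : nat -> rat, v_converges (fun n => ratr (u n)) x.

Definition finite_over_Qp : Prop :=
  exists s : seq k, forall x : k, exists c : nat -> k,
    (forall i, in_Qp (c i)) /\ x = \sum_(i < size s) c i * s`_i.
End Padic.

Definition finite_ext_Qp (p : nat) (k : fieldType) : Prop :=
  [pchar k] =i pred0 /\
  exists v : k -> rat,
    [/\ padic_valuation p v, v_complete v & finite_over_Qp v].

Section Lie.
Variables (k : fieldType) (L : vectType k) (br : L -> L -> L).

Definition is_lie_bracket : Prop :=
  [/\ forall (a : k) (x y z : L), br (a *: x + y) z = a *: br x z + br y z,
      forall (a : k) (x y z : L), br z (a *: x + y) = a *: br z x + br z y,
      forall x : L, br x x = 0
    & forall x y z : L, br x (br y z) + br y (br z x) + br z (br x y) = 0].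

Definition lie_abelian : Prop := forall x y : L, br x y = 0.

(* centralizer of x is abelian for every nonzero x *)
Definition lie_CA : Prop :=
  forall x : L, x != 0 -> forall y z : L, br x y = 0 -> br x z = 0 -> br y z = 0.

Definition lie_ideal (I : {vspace L}) : Prop :=
  forall x y : L, y \in I -> br x y \in I.

Definition lie_subalgebra (U : {vspace L}) : Prop :=
  forall x y : L, x \in U -> y \in U -> br x y \in U.

(* reductive: the adjoint representation is completely reducible,
   i.e. every ideal has a complementary ideal *)
Definition lie_reductive : Prop :=
  forall I : {vspace L}, lie_ideal I ->
    exists J : {vspace L}, [/\ lie_ideal J, (I + J)%VS = fullv & (I :&: J)%VS = 0%VS].

Definition lie_simple : Prop :=
  ~ lie_abelian /\
  forall I : {vspace L}, lie_ideal I -> I = 0%VS \/ I = fullv.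

Definition ad_split (t : L) : Prop :=
  exists s : seq L, <<s>>%VS = fullv /\
    forall e, e \in s -> exists a : k, br t e = a *: e.

Definition split_toral (T : {vspace L}) : Prop :=
  lie_subalgebra T /\ forall t, t \in T -> ad_split t.

Definition max_split_toral (T : {vspace L}) : Prop :=
  split_toral T /\
  forall T' : {vspace L}, split_toral T' -> (T <= T')%VS -> T' = T.

(* k-rank at most 1: (every, equivalently any) maximal split toral
   subalgebra has dimension <= 1 *)
Definition krank_le1 : Prop :=
  forall T : {vspace L}, max_split_toral T -> (\dim T <= 1)%N.
End Lie.

From HB Require Import structures.
From mathcomp Require Import all_boot all_order all_algebra.
Set Implicit Arguments. Unset Strict Implicit. Unset Printing Implicit Defensive.
Import GRing.Theory.
Local Open Scope ring_scope.

(* Neither the p-adic nature of k nor the maximality of the split toral subalgebra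
   plays a role.  Simplicity: a complementary ideal J of a proper nonzero ideal I
   commutes with I, so J lies in the centralizer of a nonzero element of I and is
   abelian; then a nonzero y in J centralizes I + J = L, and CA makes L abelian.
   Rank: a split toral T is abelian, since an eigenvector w in T of ad x with
   eigenvalue c gives [w,[w,x]] = 0, hence [w,x] = -c w = 0 as ad w is
   diagonalizable.  If t, s in T are independent, a common eigenvector w of ad t and
   ad s, with eigenvalues a and c, is centralized by r = c t - a s, which also
   centralizes t; CA gives [w,t] = 0, i.e. a = 0.  So the diagonalizable ad t has
   only the eigenvalue 0, hence vanishes, and the centralizer of t is all of L.
   Diagonalizability is used through the annihilating polynomial of ad t, the product
   of the X - c over its eigenvalues c. *)


Lemma seq_choice (T U : eqType) (P : T -> U -> Prop) (s : seq T) :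
    (forall x, x \in s -> exists y, P x y) ->
  exists ys : seq U, forall x, x \in s -> exists2 y, y \in ys & P x y.
Proof.
elim: s => [|x s IH] Ps; first by exists [::].
have [|ys ys_s] := IH; first by move=> x' x's; apply: Ps; rewrite inE x's orbT.
have [y Pxy] := Ps x (mem_head _ _).
exists (y :: ys) => x'; rewrite inE => /orP[/eqP->|/ys_s[y' y'_ys Px'y']].
  by exists y; rewrite ?mem_head.
by exists y'; rewrite // inE y'_ys orbT.
Qed.

Lemma vspace_dim_gt1 (k : fieldType) (L : vectType k) (T : {vspace L}) :
  (1 < \dim T)%N -> exists t s, [/\ t \in T, s \in T, t != 0 & s \notin <[t]>%VS].
Proof.
move=> T_gt1; have t_neq0 : vpick T != 0.
  by rewrite vpick0 -dimv_eq0 -lt0n (ltn_trans _ T_gt1).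
have /subvPn[s sT s_notin] : ~~ (T <= <[vpick T]>)%VS.
  by apply: contraTN T_gt1 => /dimvS; rewrite dim_vline t_neq0 -leqNgt.
by exists (vpick T), s; split; rewrite ?memv_pick.
Qed.

Section Diagonalizable.
Variables (k : fieldType) (L : vectType k) (D : L -> L).
Hypothesis D_linear : linear D.
HB.instance Definition _ := GRing.isLinear.Build k L L *:%R D D_linear.

Definition eigen_spanned : Prop :=
  exists s : seq L, <<s>>%VS = fullv /\ forall e, e \in s -> exists a : k, D e = a *: e.

(* [shift_prod cs x] is [p(D) x] for [p = \prod_(c <- cs) ('X - c)]. *)
Fixpoint shift_prod (cs : seq k) (x : L) : L :=
  if cs is c :: cs' then shift_prod cs' (D x - c *: x) else x.

Lemma shift_prod_is_linear cs : linear (shift_prod cs).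
Proof.
elim: cs => [//|c cs IH] a x y /=.
by rewrite -IH linearD linearZ /= scalerDr scalerBr !scalerA mulrC opprD addrACA.
Qed.

HB.instance Definition _ cs :=
  GRing.isLinear.Build k L L *:%R (shift_prod cs) (shift_prod_is_linear cs).

Lemma shift_prod_eigen cs b e :
  D e = b *: e -> shift_prod cs e = (\prod_(c <- cs) (b - c)) *: e.
Proof.
move=> De; elim: cs => [|c cs IH] /=; first by rewrite big_nil scale1r.
by rewrite De -scalerBl linearZ /= IH big_cons scalerA mulrC.
Qed.

Lemma shift_prod_eigenvector (Q : L -> Prop) cs w :
    (forall c x, Q x -> Q (D x - c *: x)) -> Q w -> w != 0 -> shift_prod cs w = 0 ->
  exists2 v, Q v /\ v != 0 & exists2 c, c \in cs & D v = c *: v.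
Proof.
move=> QD; elim: cs w => [|c cs IH] w Qw /= w_neq0.
  by move/eqP; rewrite (negPf w_neq0).
have [Dw_eq|Dw_neq] := eqVneq (D w - c *: w) 0.
  move=> _; exists w => //; exists c; first exact: mem_head.
  by apply/eqP; rewrite -subr_eq0 Dw_eq.
case/(IH _ (QD c w Qw) Dw_neq) => v Qv [c' c'_cs Dv].
by exists v => //; exists c' => //; rewrite inE c'_cs orbT.
Qed.

Hypothesis D_diag : eigen_spanned.

Lemma eigen_spanned_annihilator :
  exists2 cs, 0 \notin cs & forall x, shift_prod cs (D x) = 0.
Proof.
case: D_diag => s [s_span s_eigen]; have [ev ev_s] := seq_choice s_eigen.
exists [seq a <- ev | a != 0]; first by rewrite mem_filter eqxx.
move=> x; have: x \in <<in_tuple s>>%VS by rewrite s_span memvf.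
move/coord_span->; rewrite !linear_sum big1 // => i _ /=.
have [a a_ev De] := ev_s _ (mem_nth 0 (ltn_ord i)).
rewrite !linearZ /= De linearZ /= (shift_prod_eigen _ De).
have [->|a_neq0] := eqVneq a 0; first by rewrite !scale0r scaler0.
suff -> : \prod_(c <- [seq b <- ev | b != 0]) (a - c) = 0 by rewrite !scale0r !scaler0.
apply/eqP; rewrite prodf_seq_eq0; apply/hasP.
by exists a; rewrite ?mem_filter ?a_neq0 /= ?subrr.
Qed.

Lemma eigen_spanned_ker_sqr x : D (D x) = 0 -> D x = 0.
Proof.
move=> DDx; have [cs cs_neq0 ann] := eigen_spanned_annihilator.
have DDx0 : D (D x) = 0 *: D x by rewrite DDx scale0r.
move: (ann x); rewrite (shift_prod_eigen _ DDx0) => /eqP.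
rewrite scaler_eq0 prodf_seq_eq0 => /orP[/hasP[c c_cs]|/eqP //].
by rewrite sub0r oppr_eq0 => /eqP c0; rewrite -c0 c_cs in cs_neq0.
Qed.

Lemma stable_eigenvector_neq0 (Q : L -> Prop) w :
    (forall c x, Q x -> Q (D x - c *: x)) -> Q w -> D w != 0 ->
  exists2 v, Q v /\ v != 0 & exists2 c, c != 0 & D v = c *: v.
Proof.
move=> QD Qw Dw_neq0; have [cs cs_neq0 ann] := eigen_spanned_annihilator.
have QDw : Q (D w) by have := QD 0 w Qw; rewrite scale0r subr0.
have [v Qv [c c_cs Dv]] := shift_prod_eigenvector QD QDw Dw_neq0 (ann w).
by exists v => //; exists c => //; apply: contraNneq cs_neq0 => <-.
Qed.

Lemma stable_eigenvector (Q : L -> Prop) w :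
    (forall c x, Q x -> Q (D x - c *: x)) -> Q w -> w != 0 ->
  exists2 v, Q v /\ v != 0 & exists c, D v = c *: v.
Proof.
move=> QD Qw w_neq0; have [Dw0|Dw_neq0] := eqVneq (D w) 0.
  by exists w => //; exists 0; rewrite Dw0 scale0r.
have [v Qv [c _ Dv]] := stable_eigenvector_neq0 QD Qw Dw_neq0.
by exists v => //; exists c.
Qed.

Lemma eigen_spanned_eq0 :
  (forall v c, v != 0 -> D v = c *: v -> c = 0) -> forall x, D x = 0.
Proof.
move=> eigen0 x; case: D_diag => s [s_span s_eigen].
have: x \in <<in_tuple s>>%VS by rewrite s_span memvf.
move/coord_span->; rewrite linear_sum big1 // => i _ /=.
have [a De] := s_eigen _ (mem_nth 0 (ltn_ord i)).
rewrite linearZ /= De; have [->|e_neq0] := eqVneq s`_i 0; first by rewrite !scaler0.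
by rewrite (eigen0 _ _ e_neq0 De) scale0r scaler0.
Qed.

End Diagonalizable.

Section CommutingMaps.
Variables (k : fieldType) (L : vectType k) (D E : L -> L).
Hypotheses (D_linear : linear D) (E_linear : linear E) (E_diag : eigen_spanned E).
Hypothesis DE_comm : forall x, D (E x) = E (D x).
HB.instance Definition _ := GRing.isLinear.Build k L L *:%R D D_linear.
HB.instance Definition _ := GRing.isLinear.Build k L L *:%R E E_linear.

Lemma common_eigenvector a w : w != 0 -> D w = a *: w ->
  exists2 v, v != 0 /\ D v = a *: v & exists c, E v = c *: v.
Proof.
move=> w_neq0 Dw.
have stable c x : D x = a *: x -> D (E x - c *: x) = a *: (E x - c *: x).
  by move=> Dx; rewrite linearB linearZ /= DE_comm Dx linearZ /= scalerBr !scalerA mulrC.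
have [v [Dv v_neq0] Ev] := stable_eigenvector E_linear E_diag stable Dw w_neq0.
by exists v.
Qed.

End CommutingMaps.

Section LieAlgebra.
Variables (k : fieldType) (L : vectType k) (br : L -> L -> L).
Hypothesis lieL : is_lie_bracket br.

Lemma lie_linear z : linear (br z).
Proof. by case: lieL => _ brR _ _ a x y; apply: brR. Qed.

HB.instance Definition _ z := GRing.isLinear.Build k L L *:%R (br z) (lie_linear z).

Lemma lie_alt x : br x x = 0.
Proof. by case: lieL. Qed.

Lemma lieC x y : br x y = - br y x.
Proof.
case: lieL => brL _ _ _; apply/eqP; rewrite -addr_eq0.
have brDl u v z : br (u + v) z = br u z + br v z.
  by have := brL 1 u v z; rewrite !scale1r.
by have := lie_alt (x + y); rewrite brDl !linearD /= !lie_alt add0r addr0 => ->.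
Qed.

Lemma lie_ad_comm t s x : br t s = 0 -> br t (br s x) = br s (br t x).
Proof.
case: lieL => _ _ _ jacobi ts0; have := jacobi t s x.
rewrite ts0 linear0 addr0 [br x t]lieC linearN /= => /eqP.
by rewrite subr_eq0 => /eqP.
Qed.

Lemma lie_CA_central_abelian y : lie_CA br -> y != 0 ->
  (forall x, br y x = 0) -> lie_abelian br.
Proof. by move=> CA y_neq0 y_central u v; apply: (CA y). Qed.

Lemma ad_split_eigen0 x w c : ad_split br w -> w != 0 -> br x w = c *: w -> c = 0.
Proof.
move=> w_split w_neq0 xw.
have wx : br w x = - (c *: w) by rewrite lieC xw.
have : br w x = 0.
  apply: (eigen_spanned_ker_sqr (lie_linear w) w_split).
  by rewrite wx linearN linearZ /= lie_alt scaler0 oppr0.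
by rewrite wx => /eqP; rewrite oppr_eq0 scaler_eq0 (negPf w_neq0) orbF => /eqP.
Qed.

Lemma split_toral_abelian T x y : split_toral br T -> x \in T -> y \in T -> br x y = 0.
Proof.
case=> T_sub T_split xT yT; apply/eqP/negP => /negP xy_neq0.
have T_stable c w : w \in T -> br x w - c *: w \in T.
  by move=> wT; rewrite memvB ?memvZ ?T_sub.
have [v [vT v_neq0] [c c_neq0 xv]] :=
  stable_eigenvector_neq0 (lie_linear x) (T_split x xT) T_stable yT xy_neq0.
by move: c_neq0; rewrite (ad_split_eigen0 (T_split v vT) v_neq0 xv) eqxx.
Qed.

Lemma lie_CA_ad_eigen0 t s a w : lie_CA br -> br t s = 0 -> ad_split br s ->
  s \notin <[t]>%VS -> w != 0 -> br t w = a *: w -> a = 0.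
Proof.
move=> CA ts0 s_split s_notin w_neq0 tw; apply/eqP/negP => /negP a_neq0.
have [v [v_neq0 tv] [c sv]] := common_eigenvector (lie_linear t) (lie_linear s)
  s_split (fun x => lie_ad_comm x ts0) w_neq0 tw.
pose r := c *: t - a *: s.
have r_neq0 : r != 0.
  apply: contraNneq s_notin => /eqP; rewrite subr_eq0 => /eqP ct.
  by apply/vlineP; exists (a^-1 * c); rewrite -scalerA ct scalerA mulVf ?scale1r.
have rv0 : br r v = 0.
  rewrite lieC linearB !linearZ /= [br v t]lieC [br v s]lieC tv sv.
  by rewrite !scalerN !scalerA mulrC subrr oppr0.
have rt0 : br r t = 0.
  by rewrite lieC linearB !linearZ /= lie_alt ts0 !(oppr0, scaler0, addr0).
have := CA r r_neq0 v t rv0 rt0; rewrite lieC tv => /eqP.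
by rewrite oppr_eq0 scaler_eq0 (negPf a_neq0) (negPf v_neq0).
Qed.

Lemma split_toral_dim_le1 T : lie_CA br -> ~ lie_abelian br -> split_toral br T ->
  (\dim T <= 1)%N.
Proof.
move=> CA nab T_toral; rewrite leqNgt; apply/negP.
case/vspace_dim_gt1 => t [s [tT sT t_neq0 s_notin]].
have ts0 := split_toral_abelian T_toral tT sT.
have [_ T_split] := T_toral.
apply: nab (lie_CA_central_abelian CA t_neq0 _).
apply: (eigen_spanned_eq0 (lie_linear t) (T_split t tT)) => w a.
exact: lie_CA_ad_eigen0 CA ts0 (T_split s sT) s_notin.
Qed.

Lemma lie_ideal_cap0_comm I J u v : lie_ideal br I -> lie_ideal br J ->
  (I :&: J = 0)%VS -> u \in I -> v \in J -> br u v = 0.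
Proof.
move=> I_ideal J_ideal IJ0 uI vJ; apply/eqP; rewrite -memv0 -IJ0 memv_cap J_ideal //.
by rewrite lieC memvN I_ideal.
Qed.

Lemma lie_CA_reductive_simple I : lie_reductive br -> ~ lie_abelian br -> lie_CA br ->
  lie_ideal br I -> I = 0%VS \/ I = fullv.
Proof.
move=> red nab CA I_ideal; have [->|I_neq0] := eqVneq I 0%VS; first by left.
have [->|I_neqT] := eqVneq I fullv; first by right.
have [J [J_ideal IJ IJ0]] := red I I_ideal; exfalso.
have IJ_comm := lie_ideal_cap0_comm I_ideal J_ideal IJ0.
have J_neq0 : J != 0%VS by apply: contraNneq I_neqT => J0; rewrite -IJ J0 addv0.
have J_abelian u v : u \in J -> v \in J -> br u v = 0.
  by move=> uJ vJ; apply: (CA (vpick I)); rewrite ?vpick0 ?IJ_comm ?memv_pick.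
apply: nab (lie_CA_central_abelian CA (y := vpick J) _ _); first by rewrite vpick0.
move=> x; have: x \in (I + J)%VS by rewrite IJ memvf.
case/memv_addP => u uI [v vJ ->].
by rewrite linearD /= lieC IJ_comm ?J_abelian ?memv_pick // oppr0 add0r.
Qed.

End LieAlgebra.

Theorem lemma2p4 (p : nat) (k : fieldType) (L : vectType k) (br : L -> L -> L) :
  prime p -> finite_ext_Qp p k ->
  is_lie_bracket br -> lie_reductive br -> ~ lie_abelian br -> lie_CA br ->
  lie_simple br /\ krank_le1 br.
Proof.
move=> _ _ lieL red nab CA; split.
  by split=> [|I]; [exact: nab | exact: lie_CA_reductive_simple].
by move=> T [T_toral _]; exact: split_toral_dim_le1 CA nab T_toral.
Qed.
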